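(* Let $\omega\ge 2$ and let $\Gamma$ be a finite simple graph that is $\omega$-clique regular, with $m$ cliques of order $\omega$ (so $\Gamma$ has $N=m\binom{\omega}{2}$ edges). Let $\mu_1\le\cdots\le\mu_N$ be the eigenvalues of the adjacency matrix of the line graph $L(\Gamma)$. Then every eigenvalue $\lambda$ of the adjacency matrix of $C_\omega(\Gamma)$ satisfies \[\frac{\omega}{\omega-1}\left(\frac{\mu_1}{2}-\omega+2\right)\le\lambda\le\frac{\omega}{\omega-1}\left(\frac{\mu_N}{2}-\omega+2\right).\]
   Context: A graph is $\omega$-clique regular if it has a nonempty edge set and every edge is contained in exactly one clique of order $\omega$. $L(\Gamma)$ is the line graph (vertices = edges of $\Gamma$, adjacent iff sharing an endpoint). The $\omega$-clique graph $C_\omega(\Gamma)$ has as vertices the cliques of order $\omega$ in $\Gamma$, two distinct ones adjacent iff they have nonempty intersection. *)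

From mathcomp Require Import all_boot all_order all_algebra.
From mathcomp Require Import reals.
Set Implicit Arguments. Unset Strict Implicit. Unset Printing Implicit Defensive.
Import Order.TTheory GRing.Theory Num.Theory.
Local Open Scope ring_scope.

Definition simple_graph (T : finType) (e : rel T) : Prop :=
  symmetric e /\ irreflexive e.

Definition is_clique (T : finType) (e : rel T) (K : {set T}) : bool :=
  [forall x in K, forall y in K, (x != y) ==> e x y].

Definition is_wclique (T : finType) (e : rel T) (w : nat) (K : {set T}) : bool :=
  is_clique e K && (#|K| == w).

Definition wclique_regular (T : finType) (e : rel T) (w : nat) : Prop :=
  (exists x y, e x y) /\
  forall x y, e x y ->
    exists! K : {set T}, is_wclique e w K /\ x \in K /\ y \in K.

Definition is_edge (T : finType) (e : rel T) (E : {set T}) : bool :=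
  [exists x, exists y, e x y && (E == [set x; y])].

Definition edge_type (T : finType) (e : rel T) : finType :=
  {E : {set T} | is_edge e E}.

Definition line_adj (T : finType) (e : rel T) : rel (edge_type e) :=
  fun E F => (E != F) && (val E :&: val F != set0).

Definition wclique_type (T : finType) (e : rel T) (w : nat) : finType :=
  {K : {set T} | is_wclique e w K}.

Definition clique_adj (T : finType) (e : rel T) (w : nat) : rel (wclique_type e w) :=
  fun K L => (K != L) && (val K :&: val L != set0).

Definition adjmx (R : nzRingType) (V : finType) (adj : rel V) : 'M[R]_#|V| :=
  \matrix_(i, j) (adj (enum_val i) (enum_val j))%:R.

From mathcomp Require Import all_boot all_order all_algebra.
From mathcomp Require Import reals complex spectral sesquilinear ring.
Set Implicit Arguments. Unset Strict Implicit. Unset Printing Implicit Defensive.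
Import Order.TTheory GRing.Theory Num.Theory.
Local Open Scope ring_scope.

(* Let B, M and P be the edge-vertex, clique-vertex and clique-edge incidence
   matrices of the graph.  Distinct edges, and (by w-clique regularity) distinct
   w-cliques, share at most one vertex, so B B^T = 2 + A(L) and
   M M^T = w + A(C_w); moreover P B = (w - 1) M and P P^T = C(w, 2).  Hence if
   x A(C_w) = lam x, the vector y = x P satisfies y y^T = C(w, 2) x x^T and
   y A(L) y^T = ((w - 1)^2 (w + lam) - w (w - 1)) x x^T.  The Rayleigh bounds
   mu_1 y y^T <= y A(L) y^T <= mu_N y y^T, obtained from the spectral theorem
   over R[i], then rearrange into the two inequalities. *)

Section SpectralQuadraticForm.
Local Open Scope sesquilinear_scope.
Context {C : numClosedFieldType} {n : nat} {A : 'M[C]_n}.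
Let P := spectralmx A.
Let d := spectral_diag A.

Lemma eigenvalue_spectral_diag k : A \is normalmx -> eigenvalue A (d 0 k).
Proof.
move=> /orthomx_spectralP; rewrite invmx_unitary ?spectral_unitarymx // => AE.
apply/eigenvalueP; exists (delta_mx 0 k *m P).
  rewrite [in LHS]AE !mulmxA mulmxtVK ?spectral_unitarymx //.
  by rewrite -!rowE row_diag_mx -scalemxAl rowE.
rewrite mulmx_free_eq0 ?row_free_unit ?spectral_unit //.
by apply/negP => /eqP/matrixP/(_ 0 k)/eqP; rewrite !mxE !eqxx oner_eq0.
Qed.

Lemma spectral_quadform (u : 'rV[C]_n) (z := u *m P^t*) : A \is normalmx ->
  (u *m A *m u^t*) 0 0 = \sum_k d 0 k * `|z 0 k| ^+ 2.
Proof.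
move=> /orthomx_spectralP; rewrite invmx_unitary ?spectral_unitarymx // => AE.
have -> : u *m A *m u^t* = z *m diag_mx d *m z^t*.
  by rewrite AE /z !trmx_mul !map_mxM trmxCK !mulmxA.
rewrite mxE; apply: eq_bigr => k _.
by rewrite mul_mx_diag !mxE normCK mulrAC mulrC.
Qed.

Lemma spectral_normform (u : 'rV[C]_n) (z := u *m P^t*) :
  (u *m u^t*) 0 0 = \sum_k `|z 0 k| ^+ 2.
Proof.
have -> : u *m u^t* = z *m z^t*.
  by rewrite /z trmx_mul map_mxM trmxCK mulmxA mulmxKtV ?spectral_unitarymx.
by rewrite mxE; apply: eq_bigr => k _; rewrite !mxE normCK.
Qed.
End SpectralQuadraticForm.

Section RealSymmetric.
Local Open Scope sesquilinear_scope.
Variables (R : realType) (n : nat) (A : 'M[R]_n).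
Hypothesis symA : A^T = A.
Local Notation toC := (real_complex R).
Let Ac := map_mx toC A.

Let map_realmx m k (M : 'M[R]_(m, k)) : map_mx toC M \is a realmx.
Proof.
by apply/mxOverP => i j; rewrite mxE; apply/complex_realP; exists (M i j).
Qed.

Let Ac_herm : Ac \is hermsymmx.
Proof.
by apply/is_hermitianmxP; rewrite expr0 scale1r /Ac map_trmx symA realmxC.
Qed.

Let spectral_diag_eigen k :
  exists2 a, eigenvalue A a & spectral_diag Ac 0 k = toC a.
Proof.
have dR : spectral_diag Ac 0 k \is Num.real.
  by move/mxOverP: (hermitian_spectral_diag_real Ac_herm); apply.
exists (complex.Re (spectral_diag Ac 0 k)); last exact/esym/RRe_real.
have := eigenvalue_spectral_diag k (hermitian_normalmx Ac_herm).
by rewrite -{1}(RRe_real dR) -(eigenvalue_map toC).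
Qed.

Lemma symmetric_rayleigh (m1 mN : R) (y : 'rV[R]_n) :
  (forall mu, eigenvalue A mu -> m1 <= mu) ->
  (forall mu, eigenvalue A mu -> mu <= mN) ->
  m1 * (y *m y^T) 0 0 <= (y *m A *m y^T) 0 0 <= mN * (y *m y^T) 0 0.
Proof.
move=> lb ub; pose yc := map_mx toC y.
have yc_adj : yc^t* = map_mx toC y^T by rewrite map_trmx realmxC.
have quadE : toC ((y *m A *m y^T) 0 0) = (yc *m Ac *m yc^t*) 0 0.
  by rewrite yc_adj -!map_mxM [RHS]mxE.
have normE : toC ((y *m y^T) 0 0) = (yc *m yc^t*) 0 0.
  by rewrite yc_adj -map_mxM [RHS]mxE.
rewrite -!lecR !rmorphM /= quadE normE (spectral_normform (A := Ac)).
rewrite spectral_quadform ?hermitian_normalmx // !mulr_sumr.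
apply/andP; split; apply: ler_sum => k _; have [a Aa ->] := spectral_diag_eigen k;
  rewrite ler_wpM2r ?exprn_ge0 ?normr_ge0 ?lecR //.
- exact: lb.
- exact: ub.
Qed.
End RealSymmetric.

Section EdgesAndCliques.
Variables (T : finType) (e : rel T).
Hypothesis e_irr : irreflexive e.

Lemma card_edge (S : {set T}) : is_edge e S -> #|S| = 2%N.
Proof.
case/existsP => x /existsP [y /andP [exy /eqP ->]].
by rewrite cards2; case: eqVneq exy => [->|]; rewrite ?e_irr.
Qed.

Lemma edge_meet_le1 (E F : edge_type e) :
  E != F -> (#|val E :&: val F| <= 1)%N.
Proof.
apply: contraR; rewrite -ltnNge => cardEF; apply/eqP/val_inj.
have EFE : val E :&: val F = val E.
  by apply/eqP; rewrite eqEcard subsetIl card_edge ?(valP E).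
have EFF : val E :&: val F = val F.
  by apply/eqP; rewrite eqEcard subsetIr card_edge ?(valP F).
by rewrite -EFE EFF.
Qed.

Lemma line_adj_sym : symmetric (@line_adj T e).
Proof. by move=> E F; rewrite /line_adj eq_sym setIC. Qed.

Lemma cliqueP {K : {set T}} :
  is_clique e K -> {in K &, forall x y, x != y -> e x y}.
Proof.
by move=> /forall_inP Kcl x y xK yK; move/forall_inP/(_ y yK)/implyP: (Kcl x xK).
Qed.

Lemma clique_edgeE {K S : {set T}} :
  is_clique e K -> S \subset K -> is_edge e S = (#|S| == 2%N).
Proof.
move=> Kcl SK; apply/idP/idP => [/card_edge -> //|].
case/cards2P => x [y [xy SE]]; apply/existsP; exists x; apply/existsP; exists y.
move: SK; rewrite SE eqxx andbT subUset !sub1set => /andP [xK yK].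
exact: (cliqueP Kcl xK yK xy).
Qed.

Lemma card_edges_in_clique (K : {set T}) (P : pred {set T}) :
  is_clique e K -> (forall S, P S -> S \subset K) ->
  #|[set E : edge_type e | P (val E)]| = #|[set S | P S & #|S| == 2%N]|.
Proof.
move=> Kcl PK; rewrite -(card_imset _ val_inj); apply: eq_card => S.
rewrite inE; apply/imsetP/andP => [[E] | [PS S2]].
  by rewrite inE => PE ->; rewrite PE card_edge ?(valP E).
have ES : is_edge e S by rewrite (clique_edgeE Kcl (PK S PS)).
by exists (exist _ S ES); rewrite ?inE.
Qed.

Lemma card_edges_sub_clique (K : {set T}) :
  is_clique e K -> #|[set E : edge_type e | val E \subset K]| = 'C(#|K|, 2).
Proof.
move=> Kcl.
by rewrite (@card_edges_in_clique K (fun S => S \subset K) Kcl) ?cards_draws.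
Qed.

Lemma card_edges_at_sub_clique (K : {set T}) v : is_clique e K ->
  #|[set E : edge_type e | (val E \subset K) && (v \in val E)]| =
  (#|K|.-1 * (v \in K))%N.
Proof.
move=> Kcl.
rewrite (@card_edges_in_clique K (fun S => (S \subset K) && (v \in S)) Kcl);
  last by move=> S /andP [].
have [vK | vK] := boolP (v \in K); last first.
  rewrite muln0; apply/eqP; rewrite cards_eq0; apply/eqP/setP => S; rewrite !inE.
  by apply/negbTE; apply: contra vK => /andP [/andP [/subsetP SK /SK]].
have -> : [set S : {set T} | (S \subset K) && (v \in S) & #|S| == 2%N] =
          (fun u => [set v; u]) @: (K :\ v).
  apply/setP => S; rewrite inE; apply/idP/imsetP => [/andP [/andP [SK vS]] | [u]].
    rewrite (cardsD1 v) vS => /eqP [] /eqP /cards1P [u Su].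
    have uS : u \in S :\ v by rewrite Su inE.
    exists u; first by move: uS; rewrite !inE => /andP [-> /(subsetP SK)].
    by rewrite -(setD1K vS) Su.
  rewrite !inE => /andP [uv uK] ->.
  by rewrite subUset !sub1set vK uK set21 cards2 (eq_sym v) uv.
rewrite (card_in_imset (f := fun u => [set v; u])) ?(cardsD1 v K) ?vK ?muln1 //.
move=> u1 u2 /[!inE] /andP [u1v _] _ eq12.
by have := set22 v u1; rewrite eq12 !inE (negbTE u1v) => /eqP.
Qed.

Lemma wclique_meet_le1 w (K K' : wclique_type e w) :
  wclique_regular e w -> K != K' -> (#|val K :&: val K'| <= 1)%N.
Proof.
move=> [_ uniqK]; apply: contraR; rewrite -ltnNge.
case/card_gt1P => x [y [/setIP [xK xK'] /setIP [yK yK'] xy]].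
have [K0 [_ K0E]] := uniqK x y (cliqueP (andP (valP K)).1 xK yK xy).
by apply/eqP/val_inj; rewrite -(K0E (val K)) ?(K0E (val K')) //;
  split=> //; exact: valP.
Qed.
End EdgesAndCliques.

Definition incmx (R : nzRingType) (U V : finType) (r : U -> V -> bool) :
  'M[R]_(#|U|, #|V|) := \matrix_(i, j) (r (enum_val i) (enum_val j))%:R.

Section IncidenceMatrices.
Variable R : nzRingType.

Lemma trmx_incmx (U V : finType) (r : U -> V -> bool) :
  (incmx R r)^T = incmx R (fun y x => r x y).
Proof. by apply/matrixP => i j; rewrite !mxE. Qed.

Lemma trmx_adjmx (V : finType) (adj : rel V) :
  symmetric adj -> (adjmx R adj)^T = adjmx R adj.
Proof. by move=> adjC; apply/matrixP => i j; rewrite !mxE adjC. Qed.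

Lemma mul_incmx (U V W : finType) (r : U -> V -> bool) (s : V -> W -> bool) :
  incmx R r *m incmx R s =
  \matrix_(i, j) #|[set y | r (enum_val i) y & s y (enum_val j)]|%:R.
Proof.
apply/matrixP => i j; rewrite !mxE; under eq_bigr do rewrite !mxE -natrM mulnb.
rewrite -(big_enum_val (A := V)
  (fun y => (r (enum_val i) y && s y (enum_val j))%:R)) /=.
rewrite -sum1_card natr_sum [RHS]big_mkcond [LHS]big_mkcond /=.
by apply: eq_bigr => y _; rewrite !inE; case: (_ && _).
Qed.

Lemma gram_incmx_meet (T U : finType) (f : U -> {set T}) c :
  (forall X, #|f X| = c) -> (forall X Y, X != Y -> (#|f X :&: f Y| <= 1)%N) ->
  incmx R (fun X v => v \in f X) *m (incmx R (fun X v => v \in f X))^T =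
  c%:R%:M + adjmx R (fun X Y => (X != Y) && (f X :&: f Y != set0)).
Proof.
move=> fc fmeet; rewrite trmx_incmx mul_incmx; apply/matrixP => i j.
rewrite !mxE -(inj_eq enum_val_inj).
have -> : [set v | v \in f (enum_val i) & v \in f (enum_val j)] =
          f (enum_val i) :&: f (enum_val j) by apply/setP => v; rewrite !inE.
case: eqVneq => [-> | neq] /=; first by rewrite setIid fc addr0.
by have := fmeet _ _ neq; rewrite add0r -card_gt0; case: #|_| => [|[|]].
Qed.

Section GraphIncidence.
Variables (T : finType) (e : rel T) (w : nat).
Hypothesis e_irr : irreflexive e.
Local Notation edge := (edge_type e).
Local Notation clique := (wclique_type e w).

Definition edge_incmx := incmx R (fun (E : edge) v => v \in val E).
Definition clique_incmx := incmx R (fun (K : clique) v => v \in val K).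
Definition clique_edge_incmx :=
  incmx R (fun (K : clique) (E : edge) => val E \subset val K).

Lemma edge_incmx_gram :
  edge_incmx *m edge_incmx^T = 2%:R%:M + adjmx R (@line_adj T e).
Proof.
apply: gram_incmx_meet => [E | E F]; first exact/card_edge/valP.
exact: edge_meet_le1.
Qed.

Lemma clique_incmx_gram : wclique_regular e w ->
  clique_incmx *m clique_incmx^T = w%:R%:M + adjmx R (@clique_adj T e w).
Proof.
move=> reg; apply: gram_incmx_meet => [K | K K']; last exact: wclique_meet_le1.
by case/andP: (valP K) => _ /eqP.
Qed.

Lemma clique_edge_incmxM :
  clique_edge_incmx *m edge_incmx = w.-1%:R *: clique_incmx.
Proof.
rewrite mul_incmx; apply/matrixP => i j; rewrite !mxE -natrM.
case/andP: (valP (enum_val i)) => Kcl /eqP Kw.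
by rewrite (card_edges_at_sub_clique e_irr _ Kcl) Kw.
Qed.

Lemma clique_edge_incmx_gram : wclique_regular e w ->
  clique_edge_incmx *m clique_edge_incmx^T = 'C(w, 2)%:R%:M.
Proof.
move=> reg; rewrite trmx_incmx mul_incmx; apply/matrixP => i j; rewrite !mxE.
rewrite -(inj_eq enum_val_inj); case/andP: (valP (enum_val i)) => Kcl /eqP Kw.
case: eqVneq => [<- | neq].
  rewrite -[X in 'C(X, 2)]Kw -(card_edges_sub_clique e_irr Kcl) mulr1n.
  by congr (_%:R); apply: eq_card => E; rewrite !inE andbb.
rewrite mulr0n (_ : #|_| = 0%N) //; apply/eqP; rewrite cards_eq0.
apply/eqP/setP => E; rewrite !inE; apply/negbTE/negP => /andP [EK EK'].
have := wclique_meet_le1 reg neq; apply/negP; rewrite -ltnNge.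
rewrite -(card_edge e_irr (valP E)); apply/subset_leq_card.
by rewrite subsetI EK EK'.
Qed.
End GraphIncidence.
End IncidenceMatrices.

Section QuadformLift.
Variables (R : comNzRingType) (k m t : nat).
Variables (P : 'M[R]_(k, m)) (B : 'M[R]_(m, t)) (M : 'M[R]_(k, t)).
Variables (AB : 'M[R]_m) (AM : 'M[R]_k) (a b c d : R).
Hypotheses (BBt : B *m B^T = b%:M + AB) (MMt : M *m M^T = d%:M + AM).
Hypotheses (PB : P *m B = a *: M) (PPt : P *m P^T = c%:M).
Variables (x : 'rV[R]_k) (lam : R).
Let y := x *m P.

Lemma normform_lift : y *m y^T = c *: (x *m x^T).
Proof. by rewrite /y trmx_mul mulmxA -(mulmxA x) PPt mul_mx_scalar scalemxAl. Qed.

Lemma quadform_lift : x *m AM = lam *: x ->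
  y *m AB *m y^T = (a ^+ 2 * (d + lam) - b * c) *: (x *m x^T).
Proof.
move=> xA; have -> : AB = B *m B^T - b%:M by rewrite BBt addrC addKr.
have yB : y *m B = a *: (x *m M) by rewrite /y -mulmxA PB scalemxAr.
rewrite mulmxBr mulmxBl mulmxA yB -mulmxA -trmx_mul yB.
rewrite mul_mx_scalar -!scalemxAl normform_lift linearZ /= -scalemxAr.
rewrite trmx_mul !mulmxA -(mulmxA x) MMt mulmxDr mul_mx_scalar xA mulmxDl.
by rewrite -!scalemxAl !scalerA -scalerDl scalerA -scalerBl expr2.
Qed.
End QuadformLift.

Lemma dotmx_gt0 (R : realDomainType) n (x : 'rV[R]_n) :
  x != 0 -> 0 < (x *m x^T) 0 0.
Proof.
move=> x0; rewrite mxE; under eq_bigr do rewrite mxE -expr2.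
rewrite lt_def sumr_ge0 ?andbT => [|j _]; last exact: sqr_ge0.
apply: contraNneq x0 => sum0; apply/eqP/rowP => j; rewrite mxE.
apply/eqP; rewrite -sqrf_eq0; apply/eqP/(psumr_eq0P _ sum0) => // i _.
exact: sqr_ge0.
Qed.

Lemma clique_bound_gap (R : numFieldType) (W c mu lam : R) :
  W != 1 -> 2 * c = W * (W - 1) ->
  (W - 1) ^+ 2 * (W + lam) - 2 * c - mu * c =
  (W - 1) ^+ 2 * (lam - W / (W - 1) * (mu / 2 - W + 2)).
Proof.
move=> W1 cE; have -> : c = W * (W - 1) / 2.
  by rewrite -cE mulrC mulKf // pnatr_eq0.
by field; rewrite subr_eq0.
Qed.

Theorem theorem7 (R : realType) (T : finType) (e : rel T) (w : nat)
  (hw : (2 <= w)%N) (hG : simple_graph e) (hreg : wclique_regular e w)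
  (mu1 muN : R)
  (hmu1 : eigenvalue (adjmx R (@line_adj T e)) mu1)
  (hmu1min : forall mu, eigenvalue (adjmx R (@line_adj T e)) mu -> mu1 <= mu)
  (hmuN : eigenvalue (adjmx R (@line_adj T e)) muN)
  (hmuNmax : forall mu, eigenvalue (adjmx R (@line_adj T e)) mu -> mu <= muN)
  (lam : R) (hlam : eigenvalue (adjmx R (@clique_adj T e w)) lam) :
  (w%:R / (w%:R - 1)) * (mu1 / 2 - w%:R + 2) <= lam /\
  lam <= (w%:R / (w%:R - 1)) * (muN / 2 - w%:R + 2).
Proof.
have [x xA x_neq0] := eigenvalueP hlam.
have e_irr := hG.2.
have predwE : w.-1%:R = w%:R - 1 :> R by rewrite -subn1 natrB // ltnW.
have binE : 2 * 'C(w, 2)%:R = w%:R * (w%:R - 1) :> R.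
  by rewrite -predwE -!natrM (mul_bin_left w 1) bin1 subn1 mulnC.
have w_neq1 : w%:R != 1 :> R by rewrite pnatr_eq1 gtn_eqF.
have gapE mu := clique_bound_gap mu lam w_neq1 binE.
have sq_gt0 : 0 < (w%:R - 1) ^+ 2 :> R by rewrite exprn_gt0 // subr_gt0 ltr1n.
have normE := normform_lift (clique_edge_incmx_gram R e_irr hreg) x.
have quadE := quadform_lift (edge_incmx_gram R e_irr) (clique_incmx_gram R hreg)
  (clique_edge_incmxM R w e_irr) (clique_edge_incmx_gram R e_irr hreg) xA.
have /andP [] := symmetric_rayleigh (trmx_adjmx R (@line_adj_sym T e))
  (x *m clique_edge_incmx R e w) hmu1min hmuNmax.
rewrite quadE normE; move: (x *m x^T) (dotmx_gt0 x_neq0) => X X_gt0.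
rewrite !mxE predwE !mulrA !ler_pM2r // => lb ub.
split.
- by rewrite -subr_ge0 -(pmulr_rge0 _ sq_gt0) -gapE subr_ge0.
- by rewrite -subr_le0 -(pmulr_rle0 _ sq_gt0) -gapE subr_le0.
Qed.
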